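(* Let $\alpha\in\mathrm{relint}(\Omega)$ and $L_\alpha(x)=1-\min_ix_i/\alpha_i$. Then: 1. $L_\alpha(x)\ge0$ for all $x\in\Omega$, and $L_\alpha(x)=0$ if and only if $x=\alpha$. 2. $|L_\alpha(x_1)-L_\alpha(x_2)|\le\frac{1}{\min_i\alpha_i}\|x_1-x_2\|_\infty$ for all $x_1,x_2\in\Omega$. 3. For every fluid sample path $(\bar A,\bar X)$ (under any stationary policy) and every regular point $t$, $\frac{d}{dt}L_\alpha(\bar X[t])\le\frac{1}{\min_i\alpha_i}$.
   Context: $\Omega$ is the probability simplex in $\mathbb R^n$, and $\mathrm{relint}(\Omega)$ consists of its points with positive coordinates. Model for item 3: $K$ units move among supply locations $V_S=\{1,\dots,n\}$. In each slot exactly one customer arrives (i.i.d. types $(j',k)$, with origin $j'$ in a finite set $V_D$ and destination $k\in V_S$). Either it is served by moving one unit from a compatible location $i$ to $k$, or it is dropped, in which case the state is unchanged. Fluid sample paths: with $\bar A^K[t]=\frac1K\mathbf A^K[Kt]$ (scaled cumulative arrivals by type) and $\bar X^{K,U}[t]=\frac1K\mathbf X^{K,U}[Kt]$ (linearly interpolated), a pair $(\bar A,\bar X)$ on $[0,T]$ is an FSP under policy $U$ if some sequence of realizable scaled arrival paths, scaled initial states, and resulting state paths has a subsequence converging uniformly to $(\bar A,\bar X[0],\bar X)$. A time $t$ is regular if the FSP is differentiable at $t$. *)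

From HB Require Import structures.
From mathcomp Require Import all_boot all_order all_algebra.
From mathcomp Require Import all_classical all_reals all_analysis.
Set Implicit Arguments. Unset Strict Implicit. Unset Printing Implicit Defensive.
Import Order.TTheory GRing.Theory Num.Theory.
Import numFieldNormedType.Exports.
Local Open Scope ring_scope.
Local Open Scope classical_set_scope.

Section Defs.
Variable R : realType.
Variable n : nat.

Definition simplex : set ('I_n -> R) :=
  [set x | (forall i, 0 <= x i) /\ \sum_(i < n) x i = 1].

Definition relint_simplex : set ('I_n -> R) :=
  [set x | (forall i, 0 < x i) /\ \sum_(i < n) x i = 1].

(* min_i f i (meaningful for n >= 1; the default head value is irrelevant
   since for n >= 1 it is one of the f i). *)
Definition fmin (f : 'I_n -> R) : R :=
  let s := [seq f i | i : 'I_n] in foldr Num.min (head 0 s) s.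

Definition supnorm (x : 'I_n -> R) : R := \big[Num.max/0]_(i < n) `|x i|.

Definition Lalpha (alpha x : 'I_n -> R) : R := 1 - fmin (fun i => x i / alpha i).

End Defs.

Section Model.
Variable R : realType.
Variable n : nat.                 (* supply locations V_S = 'I_n *)
Variable VD : finType.            (* demand origins V_D *)

(* customer type (j', k) : origin j' in V_D, destination k in V_S *)
Definition ctype := (VD * 'I_n)%type.

(* unnormalized state: number of units at each supply location *)
Definition state := 'I_n -> nat.

(* A stationary policy for the K-th system: given the current state and the
   arriving customer's type, either serve it from location i (Some i) or drop
   it (None). *)
Definition policy := nat -> state -> ctype -> option 'I_n.

Variable compat : 'I_n -> VD -> bool.  (* location i can serve origin j' *)

(* A service
   decision is carried out only if it is feasible (compatible location with an
   available unit); otherwise the customer is dropped and the state is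
   unchanged. *)
Definition step (U : policy) (K : nat) (x : state) (c : ctype) : state :=
  match U K x c with
  | Some i =>
      if compat i c.1 && (0 < x i)%N then
        fun l => ((x l - (l == i)) + (l == c.2))%N
      else x
  | None => x
  end.

Fixpoint traj (U : policy) (K : nat) (x0 : state) (w : nat -> ctype) (m : nat)
  : state :=
  match m with
  | 0 => x0
  | m'.+1 => step U K (traj U K x0 w m') (w m')
  end.

Definition cumarr (w : nat -> ctype) (m : nat) (c : ctype) : nat :=
  count (fun l => w l == c) (iota 0 m).

Definition interp (f : nat -> R) (s : R) : R :=
  let m := Num.truncn s in f m + (s - m%:R) * (f m.+1 - f m).

Definition scaledA (K : nat) (w : nat -> ctype) (t : R) (c : ctype) : R :=
  interp (fun m => (cumarr w m c)%:R / K%:R) (K%:R * t).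

Definition scaledX (U : policy) (K : nat) (x0 : state) (w : nat -> ctype)
  (t : R) (i : 'I_n) : R :=
  interp (fun m => (traj U K x0 w m i)%:R / K%:R) (K%:R * t).

(* i.i.d. arrival types with probability vector p; a realizable arrival
   sequence is one whose every slot has a type of positive probability *)
Definition realizable (p : ctype -> R) (w : nat -> ctype) : Prop :=
  forall m, 0 < p (w m).

Definition FSP (p : ctype -> R) (U : policy) (T : R)
  (Abar : R -> ctype -> R) (Xbar : R -> 'I_n -> R) : Prop :=
  exists (w : nat -> nat -> ctype) (x0 : nat -> state) (phi : nat -> nat),
    (forall K, realizable p (w K)) /\
    (forall K, \sum_(i < n) x0 K i = K)%N /\
    (forall r, (phi r < phi r.+1)%N) /\
    (forall eps : R, 0 < eps ->
       exists r0, forall r, (r0 <= r)%N ->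
         forall t, 0 <= t <= T ->
           (forall c, `|scaledA (phi r) (w (phi r)) t c - Abar t c| <= eps) /\
           (forall i, `|scaledX U (phi r) (x0 (phi r)) (w (phi r)) t i
                        - Xbar t i| <= eps)).

Definition regular (Abar : R -> ctype -> R) (Xbar : R -> 'I_n -> R) (t : R)
  : Prop :=
  (forall c, derivable (fun s => Abar s c) t 1) /\
  (forall i, derivable (fun s => Xbar s i) t 1).

End Model.

From HB Require Import structures.
From mathcomp Require Import all_boot all_order all_algebra.
From mathcomp Require Import all_classical all_reals all_analysis.
From mathcomp Require Import ring lra zify.
Set Implicit Arguments. Unset Strict Implicit. Unset Printing Implicit Defensive.
Import Order.TTheory GRing.Theory Num.Theory.
Import numFieldNormedType.Exports.
Local Open Scope ring_scope.
Local Open Scope classical_set_scope.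

(* Since [x] and [alpha] both sum to 1, [min_i x_i / alpha_i <= 1], with
   equality only if [x_i >= alpha_i] for all [i], i.e. [x = alpha].  Taking a
   minimum is 1-Lipschitz for the sup norm, and dividing by [alpha_i] costs a
   factor [1 / min_i alpha_i].  For item 3, each slot moves at most one unit,
   so every coordinate of a scaled state path is 1-Lipschitz in time; this
   bound passes to the fluid limit, so [L_alpha] along a fluid sample path is
   [1 / min_i alpha_i]-Lipschitz, which bounds its derivative wherever it
   exists. *)

Section Fmin.
Variable R : realType.

Lemma foldr_min_le (d : R) (s : seq R) x : x \in s -> foldr Num.min d s <= x.
Proof.
elim: s => //= a s IH; rewrite inE => /orP [/eqP->|/IH h].
  by rewrite ge_min lexx.
by rewrite ge_min h orbT.
Qed.

Lemma foldr_min_mem (d : R) (s : seq R) : foldr Num.min d s \in d :: s.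
Proof.
elim: s => [|a s IH] /=; first by rewrite inE.
rewrite /Num.min; case: ifP => _; first by rewrite !inE eqxx orbT.
by move: IH; rewrite !inE => /orP [->|->]; rewrite ?orbT.
Qed.

Variable n : nat.

Lemma fmin_le (f : 'I_n -> R) i : fmin f <= f i.
Proof. by apply: foldr_min_le; apply: map_f; rewrite mem_enum. Qed.

Lemma fmin_mem (f : 'I_n -> R) : (0 < n)%N -> exists i, fmin f = f i.
Proof.
move=> n_gt0; suff /mapP [i _ ->] : fmin f \in [seq f i | i : 'I_n] by exists i.
have : size [seq f i | i : 'I_n] = n by rewrite size_map size_enum_ord.
rewrite /fmin; case: [seq f i | i : 'I_n] => [n0|a s _ /=]; first by rewrite -n0 in n_gt0.
by have := foldr_min_mem a (a :: s); rewrite /= !inE orbA orbb.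
Qed.

Lemma dist_fmin_le (f1 f2 : 'I_n -> R) c : (0 < n)%N ->
  (forall i, `|f1 i - f2 i| <= c) -> `|fmin f1 - fmin f2| <= c.
Proof.
move=> n_gt0 f12; have [i1 e1] := fmin_mem f1 n_gt0.
have [i2 e2] := fmin_mem f2 n_gt0.
have := f12 i1; have := f12 i2; rewrite !ler_distl => /andP[_ h2] /andP[h1 _].
have := fmin_le f2 i1; have := fmin_le f1 i2; rewrite e1 e2 => m1 m2.
apply/andP; split; lra.
Qed.

End Fmin.

Lemma sum_eq1_dim_gt0 (R : realType) n (x : 'I_n -> R) :
  \sum_(i < n) x i = 1 -> (0 < n)%N.
Proof. by case: n x => // x; rewrite big_ord0 => /eqP; rewrite eq_sym oner_eq0. Qed.

Section Lalpha.
Variables (R : realType) (n : nat) (alpha : 'I_n -> R).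
Hypothesis alpha_relint : relint_simplex alpha.

Let n_gt0 : (0 < n)%N := sum_eq1_dim_gt0 alpha_relint.2.

Lemma fmin_relint_gt0 : 0 < fmin alpha.
Proof. by have [i ->] := fmin_mem alpha n_gt0; apply: alpha_relint.1. Qed.

Lemma Lalpha_lipschitz (x1 x2 : 'I_n -> R) d :
  (forall i, `|x1 i - x2 i| <= d) ->
  `|Lalpha alpha x1 - Lalpha alpha x2| <= (fmin alpha)^-1 * d.
Proof.
move=> x12; rewrite /Lalpha opprB addrC addrA subrK distrC.
apply: dist_fmin_le n_gt0 _ => i.
have ai := alpha_relint.1 i; have := fmin_le alpha i.
rewrite -mulrBl normrM normfV (gtr0_norm ai) mulrC => min_ai.
apply: ler_pM => //; first by rewrite invr_ge0 ltW.
by rewrite lef_pV2 // posrE fmin_relint_gt0.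
Qed.

Lemma Lalpha_ge0 x : simplex x -> 0 <= Lalpha alpha x.
Proof.
case=> _ x1; rewrite /Lalpha subr_ge0; set m := fmin _.
have le_x i : m * alpha i <= x i.
  by rewrite -ler_pdivlMr ?alpha_relint.1 //; apply: fmin_le.
have : \sum_(i < n) m * alpha i <= \sum_(i < n) x i by apply: ler_sum.
by rewrite -mulr_sumr alpha_relint.2 x1 mulr1.
Qed.

Lemma Lalpha_eq0 x : simplex x -> (Lalpha alpha x = 0 <-> x = alpha).
Proof.
case=> _ x1; split => [/eqP|->]; last first.
  rewrite /Lalpha; have [i ->] := fmin_mem (fun i => alpha i / alpha i) n_gt0.
  by rewrite divff ?subrr // gt_eqF // alpha_relint.1.
rewrite subr_eq0 eq_sym => /eqP min1.
have le_x i : alpha i <= x i.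
  have := fmin_le (fun i => x i / alpha i) i.
  by rewrite min1 ler_pdivlMr ?mul1r // alpha_relint.1.
have : \sum_(i < n) (x i - alpha i) == 0 by rewrite sumrB x1 alpha_relint.2 subrr.
rewrite psumr_eq0 => [/allP x_alpha|i _]; last by rewrite subr_ge0.
apply: funext => i; apply/eqP; rewrite -subr_eq0.
exact: implyP (x_alpha i (mem_index_enum _)) isT.
Qed.

End Lalpha.

Section Lipschitz.
Variables (R : realType) (V : normedModType R).

Lemma klipschitzP (k : R) (A : set R) (f : R -> V) :
  k.-lipschitz_A f <-> forall x y, A x -> A y -> `|f x - f y| <= k * `|x - y|.
Proof. by split => [H x y Ax Ay | H [x y] /= [Ax Ay]]; [apply: (H (x, y)) | apply: H]. Qed.

Lemma klipschitz_itv_cat (k a b c : R) (f : R -> V) :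
  k.-lipschitz_`[a, b] f -> k.-lipschitz_`[b, c] f -> k.-lipschitz_`[a, c] f.
Proof.
move=> /klipschitzP fab /klipschitzP fbc; apply/klipschitzP.
suff le_xy x y : `[a, c] x -> `[a, c] y -> x <= y ->
    `|f x - f y| <= k * `|x - y|.
  move=> x y Ax Ay; have [xy|/ltW yx] := leP x y; first exact: le_xy.
  by rewrite distrC [`|x - y|]distrC; apply: le_xy.
rewrite /= !in_itv /= => /andP[ax xc] /andP[ay yc] xy.
have itv u v w : u <= v -> v <= w -> `[u, w] v by rewrite /= in_itv /= => -> ->.
have [yb|by_] := leP y b; first by apply: fab; apply: itv; lra.
have [bx|xb] := leP b x; first by apply: fbc; apply: itv; lra.
apply: le_trans (ler_distD (f b) _ _) _.
have -> : `|x - y| = `|x - b| + `|b - y|.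
  by rewrite !ler0_norm ?subr_le0; lra.
by rewrite mulrDr lerD //; [apply: fab | apply: fbc]; apply: itv; lra.
Qed.

Lemma klipschitz_approx (k : R) (A : set R) (f : R -> V) :
  (forall e, 0 < e -> exists2 g : R -> V, k.-lipschitz_A g &
     forall x, A x -> `|g x - f x| <= e) ->
  k.-lipschitz_A f.
Proof.
move=> approx; apply/klipschitzP => x y Ax Ay; apply/ler_addgt0Pr => e e0.
have [g /klipschitzP g_lip gf] := approx (e / 2) (divr_gt0 e0 (ltr0Sn _ 1)).
have -> : f x - f y = (f x - g x) + (g x - g y) + (g y - f y).
  by rewrite !addrA subrK addrNK.
have -> : k * `|x - y| + e = (e / 2 + k * `|x - y|) + e / 2.
  by rewrite [e in LHS]splitr; ring.
apply: le_trans (ler_normD _ _) _; apply: lerD; last exact: gf.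
apply: le_trans (ler_normD _ _) _; apply: lerD; last exact: g_lip.
by rewrite distrC gf.
Qed.

Lemma derive1_norm_le (g : R -> V) (t k : R) :
  derivable g t 1 -> (\forall s \near t, `|g s - g t| <= k * `|s - t|) ->
  `|g^`() t| <= k.
Proof.
move=> dg; rewrite (near_shift 0 t) => g_lip.
rewrite derive1E /derive -lim_norm //; apply: limr_le; first exact: is_cvg_norm.
near=> h.
have h0 : h != 0 by near: h; exact: nbhs_dnbhs_neq.
have : `|g (h + t) - g t| <= k * `|h|.
  near: h; apply: cvg_within; move: g_lip; apply: filterS => s /=.
  by rewrite subr0 addrK.
by rewrite /= scaler1 normrZ normfV ler_pdivrMl ?normr_gt0 // mulrC.
Unshelve. all: by end_near.
Qed.

End Lipschitz.

Section Interp.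
Variable R : realType.

Lemma natr_dist_le1 (a b : nat) : (a <= b.+1)%N -> (b <= a.+1)%N ->
  `|a%:R - b%:R| <= 1 :> R.
Proof.
move=> ab ba; have [le_ab|lt_ba] := leqP a b.
  by rewrite distrC -natrB // ger0_norm ?ler0n // -[1]/(1%:R) ler_nat; lia.
by rewrite -natrB ?(ltnW lt_ba) // ger0_norm ?ler0n // -[1]/(1%:R) ler_nat; lia.
Qed.

Lemma interp_piece (f : nat -> R) m s : m%:R <= s <= m.+1%:R ->
  interp f s = f m + (s - m%:R) * (f m.+1 - f m).
Proof.
case/andP => ms sm; rewrite /interp; have [sm'|sm'] := ltP s m.+1%:R.
  by rewrite (@truncn_def _ s m) // ms sm'.
have -> : s = m.+1%:R by apply/eqP; rewrite eq_le sm sm'.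
rewrite (@truncn_def _ _ m.+1); last by rewrite lexx /= ltr_nat.
by rewrite subrr mul0r addr0 -addn1 natrD addrAC subrr add0r mul1r subrKC.
Qed.

Lemma interp_lipschitz_piece (f : nat -> R) c m : `|f m.+1 - f m| <= c ->
  c.-lipschitz_`[m%:R, m.+1%:R] (interp f).
Proof.
move=> fm_c; apply/klipschitzP => x y; rewrite /= !in_itv /= => xm ym.
rewrite !(interp_piece f (m := m)) //.
have -> : f m + (x - m%:R) * (f m.+1 - f m) - (f m + (y - m%:R) * (f m.+1 - f m))
    = (x - y) * (f m.+1 - f m) by ring.
by rewrite normrM mulrC ler_wpM2r.
Qed.

Lemma interp_lipschitz (f : nat -> R) c : (forall m, `|f m.+1 - f m| <= c) ->
  c.-lipschitz_`[0, +oo[ (interp f).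
Proof.
move=> f_c.
have lip_m m : c.-lipschitz_`[0, m%:R] (interp f).
  elim: m => [|m IH]; last exact: klipschitz_itv_cat IH (interp_lipschitz_piece (f_c m)).
  apply/klipschitzP => x y; rewrite /= !in_itv /= => /andP[? ?] /andP[? ?].
  have [-> ->] : x = 0 /\ y = 0 by split; lra.
  by rewrite !subrr !normr0 mulr0.
apply/klipschitzP => x y; rewrite /= !in_itv /= !andbT => x_ge0 y_ge0.
have /klipschitzP := lip_m (Num.truncn (Num.max x y)).+1; apply;
  rewrite /= in_itv /= ?x_ge0 ?y_ge0 (le_trans _ (ltW (truncnS_gt _))) //;
  by rewrite le_max lexx ?orbT.
Qed.

End Interp.

Section FluidLipschitz.
Variables (R : realType) (n : nat) (VD : finType) (compat : 'I_n -> VD -> bool).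

Lemma step_dist_le1 (U : policy n VD) K x c i :
  `|(step compat U K x c i)%:R - (x i)%:R| <= 1 :> R.
Proof.
rewrite /step; case: (U K x c) => [j|]; last by rewrite subrr normr0.
case: ifP => _; last by rewrite subrr normr0.
by apply: natr_dist_le1; case: (i == j); case: (i == c.2) => /=; lia.
Qed.

Lemma scaledX_lipschitz (U : policy n VD) K x0 w i : (0 < K)%N ->
  1.-lipschitz_`[0, +oo[ (fun t : R => scaledX compat U K x0 w t i).
Proof.
move=> K_gt0; have K_pos : (0 : R) < K%:R by rewrite ltr0n.
pose f m := (traj compat U K x0 w m i)%:R / K%:R : R.
have f_incr m : `|f m.+1 - f m| <= K%:R^-1.
  rewrite -mulrBl normrM normfV (gtr0_norm K_pos) ler_pdivrMr //.
  by rewrite mulVf ?gt_eqF // step_dist_le1.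
have /klipschitzP f_lip := interp_lipschitz f_incr.
apply/klipschitzP => s1 s2; rewrite /= !in_itv /= !andbT => s1_ge0 s2_ge0.
apply: le_trans (f_lip _ _ _ _) _; try by rewrite /= in_itv /= andbT mulr_ge0.
by rewrite -mulrBr normrM (gtr0_norm K_pos) mulrA mulVf ?gt_eqF.
Qed.

Lemma FSP_lipschitz (p : ctype n VD -> R) U T Abar Xbar :
  FSP compat p U T Abar Xbar -> forall i, 1.-lipschitz_`[0, T] (fun s => Xbar s i).
Proof.
case=> w [x0 [phi [_ [_ [phi_incr close]]]]] i.
apply: klipschitz_approx => e e_gt0; have [r0 close_e] := close e e_gt0.
have K_gt0 : (0 < phi r0.+1)%N := leq_ltn_trans (leq0n _) (phi_incr r0).
exists (fun s => scaledX compat U (phi r0.+1) (x0 (phi r0.+1)) (w (phi r0.+1)) s i).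
  have /klipschitzP X_lip := scaledX_lipschitz U (x0 (phi r0.+1)) (w (phi r0.+1)) i K_gt0.
  apply/klipschitzP => s1 s2; rewrite /= !in_itv /= => /andP[s1_ge0 _] /andP[s2_ge0 _].
  by apply: X_lip; rewrite /= in_itv /= andbT.
by move=> s; rewrite /= in_itv /= => s_in; apply: (close_e r0.+1 (leqnSn r0) s s_in).2.
Qed.

End FluidLipschitz.

Theorem lemma6 (R : realType) (n : nat) (alpha : 'I_n -> R)
  (halpha : relint_simplex alpha) :
  (* 1. *)
  ((forall x, simplex x -> 0 <= Lalpha alpha x) /\
   (forall x, simplex x -> (Lalpha alpha x = 0 <-> x = alpha))) /\
  (* 2. *)
  (forall x1 x2, simplex x1 -> simplex x2 ->
     `|Lalpha alpha x1 - Lalpha alpha x2|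
       <= (fmin alpha)^-1 * supnorm (fun i => x1 i - x2 i)) /\
  (* 3. *)
  (forall (VD : finType) (compat : 'I_n -> VD -> bool) (p : ctype n VD -> R)
          (U : policy n VD) (T : R)
          (Abar : R -> ctype n VD -> R) (Xbar : R -> 'I_n -> R) (t : R),
     (forall c, 0 <= p c) -> \sum_c p c = 1 ->
     FSP compat p U T Abar Xbar ->
     0 < t < T -> regular Abar Xbar t ->
     derivable (fun s => Lalpha alpha (Xbar s)) t 1 ->
     (fun s => Lalpha alpha (Xbar s))^`() t <= (fmin alpha)^-1).
Proof.
split; first by split; [exact: Lalpha_ge0 | exact: Lalpha_eq0].
split=> [x1 x2 _ _ | VD compat p U T Abar Xbar t _ _ fsp t_in _ dL].
  apply: Lalpha_lipschitz => // i.
  exact: (le_bigmax _ (fun i => `|x1 i - x2 i|) i).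
apply: le_trans (ler_norm _) (derive1_norm_le dL _).
have t_oo : t \in `]0, T[%R by rewrite in_itv.
have t_cc : t \in `[0, T]%R by apply: subset_itv_oo_cc.
near=> s; apply: Lalpha_lipschitz => // i.
have /klipschitzP Xi_lip := FSP_lipschitz fsp i.
rewrite -[`|s - t|]mul1r; apply: Xi_lip t_cc.
by near: s; apply: filterS (near_in_itvoo t_oo) => s; apply: subset_itv_oo_cc.
Unshelve. all: by end_near.
Qed.
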